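(* Let $g:\mathbb{R}^n\to\mathbb{R}$ be a single convex differentiable constraint function whose gradient is $L$-Lipschitz, let $\mathcal{S}=\{\theta:g(\theta)\le0\}$ with $r\mathbb{K}\subseteq\mathcal{S}\subseteq R\mathbb{K}=:\mathcal{B}$ ($\mathbb{K}$ the closed unit ball at the origin, $0<r<1$), and let $f_1,\dots,f_T$ be convex with $f_t$ and $g$ Lipschitz on $\mathcal{B}$ with constant at most $G$. Run the algorithm $\lambda_t=[g(\theta_t)]_+/(\sigma\eta)$, $\theta_{t+1}=\Pi_{\mathcal{B}}\big(\theta_t-\eta(\partial f_t(\theta_t)+\lambda_t\partial([g(\theta_t)]_+))\big)$, where $\partial([g(\theta)]_+)=0$ if $g(\theta)\le0$ and $\nabla g(\theta)$ otherwise, with $\alpha\in(0,1)$, $\sigma=\frac{2G^2}{2(1-\alpha)}$ and $\eta=\frac1{G\sqrt{2RT}}$. Then for $T$ large enough, if $[g(\theta_1)]_+\le O(T^{-1/6})$ then $[g(\theta_t)]_+\le O(T^{-1/6})$ for all $t\in\{1,\dots,T\}$.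
   Context: $[a]_+=\max\{a,0\}$; $\Pi_{\mathcal{B}}$ is the Euclidean projection onto $\mathcal{B}$. These are the parameters $\sigma=\frac{(m+1)G^2}{2(1-\alpha)}$, $\eta=\frac1{G\sqrt{(m+1)RT}}$ with $m=1$. *)

From HB Require Import structures.
From mathcomp Require Import all_boot all_order all_algebra.
From mathcomp Require Import all_classical all_reals all_analysis.
Set Implicit Arguments. Unset Strict Implicit. Unset Printing Implicit Defensive.
Import Order.TTheory GRing.Theory Num.Theory.
Import numFieldNormedType.Exports.
Local Open Scope ring_scope.

Definition oc_dotv {R : realType} {n : nat} (u v : 'rV[R]_n) : R :=
  \sum_(i < n) u ord0 i * v ord0 i.
Definition oc_enorm {R : realType} {n : nat} (u : 'rV[R]_n) : R :=
  Num.sqrt (oc_dotv u u).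

Definition oc_pospart {R : realType} (a : R) : R := Num.max a 0.

Definition oc_ballK {R : realType} {n : nat} (rho : R) : set 'rV[R]_n :=
  [set x | oc_enorm x <= rho].

Definition oc_convex_fun {R : realType} {n : nat} (f : 'rV[R]_n -> R) : Prop :=
  forall (x y : 'rV[R]_n) (a : R), 0 <= a -> a <= 1 ->
    f (a *: x + (1 - a) *: y) <= a * f x + (1 - a) * f y.

Definition oc_lipschitz_on {R : realType} {n : nat} (A : set 'rV[R]_n)
    (G : R) (f : 'rV[R]_n -> R) : Prop :=
  forall x y, A x -> A y -> `|f x - f y| <= G * oc_enorm (x - y).

Definition oc_subgradient {R : realType} {n : nat} (f : 'rV[R]_n -> R)
    (x v : 'rV[R]_n) : Prop :=
  forall y, f x + oc_dotv v (y - x) <= f y.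

Definition oc_is_proj {R : realType} {n : nat} (A : set 'rV[R]_n)
    (u p : 'rV[R]_n) : Prop :=
  A p /\ forall y, A y -> oc_enorm (u - p) <= oc_enorm (u - y).

Definition oc_is_gradient {R : realType} {n : nat} (g : 'rV[R]_n -> R)
    (dg : 'rV[R]_n -> 'rV[R]_n) : Prop :=
  forall x, differentiable g x /\ forall h, 'd g x h = oc_dotv (dg x) h.

Definition oc_dpos {R : realType} {n : nat} (g : 'rV[R]_n -> R)
    (dg : 'rV[R]_n -> 'rV[R]_n) (x : 'rV[R]_n) : 'rV[R]_n :=
  if g x <= 0 then 0 else dg x.

(* Parameters with m = 1 *)
Definition oc_sigma_par {R : realType} (G alpha : R) : R :=
  (2 * G ^+ 2) / (2 * (1 - alpha)).
Definition oc_eta_par {R : realType} (G Rad : R) (T : nat) : R :=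
  1 / (G * Num.sqrt (2 * Rad * T%:R)).

Definition oc_alg_step {R : realType} {n : nat} (g : 'rV[R]_n -> R)
    (dg : 'rV[R]_n -> 'rV[R]_n) (Rad sigma eta : R)
    (theta_t v_t theta_next : 'rV[R]_n) : Prop :=
  let lambda := oc_pospart (g theta_t) / (sigma * eta) in
  oc_is_proj (oc_ballK Rad) (theta_t - eta *: (v_t + lambda *: oc_dpos g dg theta_t))
          theta_next.

From HB Require Import structures.
From mathcomp Require Import all_boot all_order all_algebra.
From mathcomp Require Import all_classical all_reals all_analysis.
From mathcomp Require Import ring lra.
Import Order.TTheory GRing.Theory Num.Theory.
Import numFieldNormedType.Exports.
Local Open Scope classical_set_scope.
Local Open Scope ring_scope.
Set Implicit Arguments. Unset Strict Implicit. Unset Printing Implicit Defensive.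

(* Write a = [g(theta)]_+ and beta = a / sigma, so that before projection the
   step is theta - (eta v + beta grad g(theta)).  Since g is convex with
   g(0) <= 0, a <= <grad g(theta), theta> <= |grad g(theta)| R; hence, as long
   as 4 L a <= sigma keeps the curvature loss in check, the penalty part lowers
   g by at least beta |grad g(theta)|^2 / 2 >= a^3 / (2 sigma R^2), while the
   subgradient part raises it by at most eta K G + 2 L eta^2 G^2 = O(eta), where
   K bounds |grad g| on B.  Projecting onto B is a radial contraction, which
   cannot increase [g]_+.  So a <= Q implies [g]_+ <= Q after the step as soon
   as O(eta) <= min(Q / 2, Q^3 / (16 sigma R^2)); with eta ~ T^(-1/2) this holds
   for Q = M T^(-1/6), and the bound propagates by induction along the run. *)

Section EuclideanSpace.
Variables (R : realType) (n : nat).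
Implicit Types (u v w : 'rV[R]_n).

Lemma dotvC u v : oc_dotv u v = oc_dotv v u.
Proof. by apply: eq_bigr => i _; rewrite mulrC. Qed.

Lemma dotvDl u v w : oc_dotv (u + v) w = oc_dotv u w + oc_dotv v w.
Proof. by rewrite /oc_dotv -big_split; apply: eq_bigr => i _; rewrite !mxE mulrDl. Qed.

Lemma dotvZl (k : R) u w : oc_dotv (k *: u) w = k * oc_dotv u w.
Proof. by rewrite /oc_dotv mulr_sumr; apply: eq_bigr => i _; rewrite !mxE mulrA. Qed.

Lemma dotvNl u w : oc_dotv (- u) w = - oc_dotv u w.
Proof. by rewrite -scaleN1r dotvZl mulN1r. Qed.

Lemma dotvBl u v w : oc_dotv (u - v) w = oc_dotv u w - oc_dotv v w.
Proof. by rewrite dotvDl dotvNl. Qed.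

Lemma dotvDr u v w : oc_dotv w (u + v) = oc_dotv w u + oc_dotv w v.
Proof. by rewrite dotvC dotvDl !(dotvC w). Qed.

Lemma dotvZr (k : R) u w : oc_dotv w (k *: u) = k * oc_dotv w u.
Proof. by rewrite dotvC dotvZl dotvC. Qed.

Lemma dotvNr u w : oc_dotv w (- u) = - oc_dotv w u.
Proof. by rewrite dotvC dotvNl dotvC. Qed.

Lemma dotvBr u v w : oc_dotv w (u - v) = oc_dotv w u - oc_dotv w v.
Proof. by rewrite dotvDr dotvNr. Qed.

Definition dotvE :=
  (dotvDl, dotvDr, dotvBl, dotvBr, dotvNl, dotvNr, dotvZl, dotvZr).

Lemma dotvv_ge0 u : 0 <= oc_dotv u u.
Proof. by apply: sumr_ge0 => i _; rewrite -expr2 sqr_ge0. Qed.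

Lemma dotvv_eq0 u : (oc_dotv u u == 0) = (u == 0).
Proof.
apply/eqP/eqP => [uu0|->]; last by rewrite /oc_dotv big1 // => i _; rewrite mxE mul0r.
apply/rowP => i; rewrite mxE; apply/eqP; rewrite -sqrf_eq0 expr2; apply/eqP.
by apply: (psumr_eq0P _ uu0) => // j _; rewrite -expr2 sqr_ge0.
Qed.

Lemma enorm_ge0 u : 0 <= oc_enorm u.
Proof. exact: sqrtr_ge0. Qed.

Lemma sqr_enorm u : oc_enorm u ^+ 2 = oc_dotv u u.
Proof. by rewrite /oc_enorm sqr_sqrtr // dotvv_ge0. Qed.

Lemma ler_dotvv u v : (oc_dotv u u <= oc_dotv v v) = (oc_enorm u <= oc_enorm v).
Proof. by rewrite -!sqr_enorm ler_sqr ?nnegrE ?enorm_ge0. Qed.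

Lemma enorm_eq0 u : (oc_enorm u == 0) = (u == 0).
Proof. by rewrite -dotvv_eq0 -sqr_enorm sqrf_eq0. Qed.

Lemma enorm0 : oc_enorm (0 : 'rV[R]_n) = 0.
Proof. by apply/eqP; rewrite enorm_eq0. Qed.

Lemma enormZ (k : R) u : oc_enorm (k *: u) = `|k| * oc_enorm u.
Proof. by rewrite /oc_enorm dotvZl dotvZr mulrA -expr2 sqrtrM ?sqr_ge0 // sqrtr_sqr. Qed.

Lemma enormN u : oc_enorm (- u) = oc_enorm u.
Proof. by rewrite -scaleN1r enormZ normrN normr1 mul1r. Qed.

Lemma discriminant_le0 (X Y Z : R) :
  0 <= Y -> (forall t, 0 <= X - 2 * t * Z + t ^+ 2 * Y) -> Z ^+ 2 <= X * Y.
Proof.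
move=> Y0 quad_ge0.
have [Y_eq0|Yn0] := eqVneq Y 0.
  have [Z_eq0|Zn0] := eqVneq Z 0; first by rewrite Z_eq0 Y_eq0 expr0n mulr0.
  have := quad_ge0 ((X + 1) / (2 * Z)).
  have -> : 2 * ((X + 1) / (2 * Z)) * Z = X + 1 by field.
  by rewrite Y_eq0 mulr0; lra.
have := quad_ge0 (Z / Y).
have -> : X - 2 * (Z / Y) * Z + (Z / Y) ^+ 2 * Y = (X * Y - Z ^+ 2) / Y by field.
by rewrite pmulr_lge0 ?invr_gt0 ?lt_def ?Yn0 // subr_ge0.
Qed.

Lemma dotv_le_enorm u v : oc_dotv u v <= oc_enorm u * oc_enorm v.
Proof.
have CS : oc_dotv u v ^+ 2 <= oc_dotv u u * oc_dotv v v.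
  apply: discriminant_le0 (dotvv_ge0 v) _ => t.
  by have := dotvv_ge0 (u - t *: v); rewrite !dotvE (dotvC v u); lra.
apply: le_trans (ler_norm _) _; rewrite -ler_sqr ?nnegrE ?mulr_ge0 ?enorm_ge0 //.
by rewrite real_normK ?num_real // exprMn !sqr_enorm.
Qed.

Lemma enormD u v : oc_enorm (u + v) <= oc_enorm u + oc_enorm v.
Proof.
rewrite -ler_sqr ?nnegrE ?addr_ge0 ?enorm_ge0 //.
rewrite sqr_enorm !dotvE (dotvC v u) sqrrD -!sqr_enorm.
have := dotv_le_enorm u v; lra.
Qed.

Lemma dotvvD_le u v :
  oc_dotv (u + v) (u + v) <= 2 * oc_dotv u u + 2 * oc_dotv v v.
Proof. by have := dotvv_ge0 (u - v); rewrite !dotvE (dotvC v u); lra. Qed.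

End EuclideanSpace.

Lemma cubic_drift_le (R : realFieldType) (a E k Q : R) :
  0 <= a -> a <= Q -> 0 < k -> E <= Q / 2 -> E <= Q ^+ 3 / 8 * k ->
  a + E - a ^+ 3 * k <= Q.
Proof.
move=> a_ge0 a_le k_gt0 E_le1 E_le2.
have ak_ge0 : 0 <= a ^+ 3 * k by rewrite mulr_ge0 ?exprn_ge0 // ltW.
have [a_le2|a_gt2] := leP a (Q / 2); first lra.
have : (Q / 2) ^+ 3 * k <= a ^+ 3 * k.
  by rewrite ler_pM2r // lerXn2r ?nnegrE //; lra.
rewrite expr_div_n (_ : 2 ^+ 3 = 8 :> R); last by rewrite !exprS expr0; lra.
lra.
Qed.

Section PositivePart.
Variable R : realType.
Implicit Types a b c : R.

Lemma pospart_ge0 a : 0 <= oc_pospart a.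
Proof. by rewrite /oc_pospart le_max lexx orbT. Qed.

Lemma le_pospart a : a <= oc_pospart a.
Proof. by rewrite /oc_pospart le_max lexx. Qed.

Lemma pospart_le a b : a <= b -> oc_pospart a <= oc_pospart b.
Proof. by move=> ab; rewrite /oc_pospart ge_max !le_max ab lexx !orbT. Qed.

Lemma pospart_ler a b : a <= b -> 0 <= b -> oc_pospart a <= b.
Proof. by move=> ab b0; rewrite /oc_pospart ge_max ab. Qed.

Lemma pospart_scale_le a c : 0 <= c <= 1 -> oc_pospart (c * a) <= oc_pospart a.
Proof.
case/andP=> c0 c1; apply: pospart_ler (pospart_ge0 _).
have [a0|a0] := leP 0 a; first by rewrite (le_trans (ler_piMl a0 c1)) ?le_pospart.
by rewrite (le_trans _ (pospart_ge0 _)) // mulr_ge0_le0 // ltW.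
Qed.

End PositivePart.

Section ProjectionOntoBall.
Variables (R : realType) (n : nat).
Implicit Types (u p q x y : 'rV[R]_n) (A : set 'rV[R]_n).

Lemma is_proj_uniq A u p q :
  (forall x y, A x -> A y -> A (2^-1 *: (x + y))) ->
  oc_is_proj A u p -> oc_is_proj A u q -> p = q.
Proof.
(* Parallelogram law: the midpoint of p and q would be strictly closer to u. *)
move=> A_mid [Ap p_min] [Aq q_min].
have := p_min _ (A_mid _ _ Ap Aq); have := p_min _ Aq; have := q_min _ Ap.
rewrite -!ler_dotvv.
have -> : u - 2^-1 *: (p + q) = 2^-1 *: ((u - p) + (u - q)).
  by apply/rowP => i; rewrite !mxE; field.
move: (u - p) (u - q) (subKr u p) (subKr u q) => a b <- <-.
rewrite !dotvE (dotvC b a) => ba ab amid.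
have /eqP : oc_dotv (b - a) (b - a) = 0.
  by apply/le_anti; rewrite dotvv_ge0 andbT !dotvE (dotvC b a); lra.
by rewrite dotvv_eq0 subr_eq0 => /eqP ->.
Qed.

Lemma ballK_midpoint (Rad : R) x y :
  oc_ballK Rad x -> oc_ballK Rad y -> oc_ballK Rad (2^-1 *: (x + y)).
Proof.
rewrite /oc_ballK /= enormZ ger0_norm ?invr_ge0 ?ler0n // => x_le y_le.
by have := enormD x y; lra.
Qed.

Lemma is_proj_ballK_scale (Rad : R) u : 0 <= Rad ->
  exists2 c : R, 0 <= c <= 1 & oc_is_proj (oc_ballK Rad) u (c *: u).
Proof.
move=> Rad_ge0; rewrite /oc_is_proj /oc_ballK /=; set N := oc_enorm u.
have [N_le|Rad_lt] := leP N Rad.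
  exists 1; first by rewrite ler01 lexx.
  by rewrite scale1r subrr enorm0; split=> // y _; exact: enorm_ge0.
have N_gt0 : 0 < N by exact: le_lt_trans Rad_lt.
have c_ge0 : 0 <= Rad / N by rewrite divr_ge0 // ltW.
have c_le1 : Rad / N <= 1 by rewrite ler_pdivrMr // mul1r (ltW Rad_lt).
exists (Rad / N); first by rewrite c_ge0 c_le1.
rewrite enormZ ger0_norm // divfK ?gt_eqF //; split=> // y y_le.
rewrite -{1}(scale1r u) -scalerBl enormZ ger0_norm ?subr_ge0 //.
rewrite mulrBl mul1r divfK ?gt_eqF //.
by have := enormD (u - y) y; rewrite subrK -/N; lra.
Qed.

End ProjectionOntoBall.

Lemma convex_scale_le (R : realType) (n : nat) (g : 'rV[R]_n -> R) (c : R) u :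
  oc_convex_fun g -> g 0 <= 0 -> 0 <= c <= 1 -> g (c *: u) <= c * g u.
Proof.
move=> g_convex g0 /andP[c0 c1]; have := g_convex u 0 c c0 c1.
rewrite scaler0 addr0 => /le_trans; apply.
by rewrite gerDl mulr_ge0_le0 // subr_ge0.
Qed.

Lemma pospart_proj_ballK (R : realType) (n : nat) (g : 'rV[R]_n -> R) (Rad : R) u p :
  oc_convex_fun g -> g 0 <= 0 -> 0 <= Rad ->
  oc_is_proj (oc_ballK Rad) u p -> oc_pospart (g p) <= oc_pospart (g u).
Proof.
move=> g_convex g0 Rad_ge0 p_proj.
have [c c01 cu_proj] := is_proj_ballK_scale u Rad_ge0.
rewrite (is_proj_uniq (@ballK_midpoint _ _ Rad) p_proj cu_proj).
exact: le_trans (pospart_le (convex_scale_le u g_convex g0 c01)) (pospart_scale_le _ c01).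
Qed.

Lemma alg_step_argE (R : realType) (n : nat) (g : 'rV[R]_n -> R) dg (sigma eta : R) x v :
  sigma != 0 -> eta != 0 ->
  x - eta *: (v + (oc_pospart (g x) / (sigma * eta)) *: oc_dpos g dg x)
  = x - (eta *: v + (oc_pospart (g x) / sigma) *: dg x).
Proof.
move=> sigma_neq0 eta_neq0; rewrite scalerDr scalerA /oc_dpos /oc_pospart.
case: ifP => [gx_le0|_]; first by rewrite max_r // !mul0r mulr0 !scale0r.
by congr (x - (_ + _ *: _)); field; apply/andP.
Qed.

Lemma nat_ind_from1_upto (P : nat -> Prop) (T : nat) : P 1%N ->
  (forall t, (1 <= t < T)%N -> P t -> P t.+1) -> forall t, (1 <= t <= T)%N -> P t.
Proof.
move=> P1 PS; elim=> [|[|t] IH] /andP[t_ge1 tT] //.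
by apply: PS => //; apply: IH; exact: ltnW.
Qed.

(* Increase of g caused by the subgradient part [eta v] of one step: the first
   order term [eta K G] plus the curvature term [2 L eta^2 G^2]. *)
Definition step_drift (R : realType) (L K G eta : R) : R :=
  eta * K * G + 2 * L * eta ^+ 2 * G ^+ 2.

Lemma step_drift_le (R : realType) (L K G eta : R) :
  0 <= L -> 0 <= K -> 0 <= G -> 0 <= eta <= 1 ->
  step_drift L K G eta <= (K * G + 2 * L * G ^+ 2) * eta.
Proof.
move=> L_ge0 K_ge0 G_ge0 /andP[eta_ge0 eta_le1].
have : 2 * L * G ^+ 2 * eta ^+ 2 <= 2 * L * G ^+ 2 * eta.
  by rewrite ler_wpM2l ?mulr_ge0 ?sqr_ge0 // expr2 ler_piMr.
by rewrite /step_drift; lra.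
Qed.

Section SmoothConstraint.
Variables (R : realType) (n : nat).
Variables (g : 'rV[R]_n -> R) (dg : 'rV[R]_n -> 'rV[R]_n) (L : R).
Hypothesis g_grad : oc_is_gradient g dg.
Hypothesis L_ge0 : 0 <= L.
Hypothesis dg_lipschitz :
  forall x y, oc_enorm (dg x - dg y) <= L * oc_enorm (x - y).

Lemma is_derive_along_line (x h : 'rV[R]_n) (s : R) :
  is_derive s 1 (fun t : R => g (x + t *: h)) (oc_dotv (dg (x + s *: h)) h).
Proof.
have [dif dgE] := g_grad (x + s *: h).
(* The difference quotients of [t |-> g (x + t h)] at s are those of g at
   [x + s h] in the direction h. *)
have quotE : (fun t : R => t^-1 *: (((fun t => g (x + t *: h)) \o shift s) (t *: 1)
                                    - g (x + s *: h)))
           = (fun t : R => t^-1 *: ((g \o shift (x + s *: h)) (t *: h) - g (x + s *: h))).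
  apply/funext => t /=; congr (_ *: (g _ - _)).
  by rewrite [t *: 1]mulr1 scalerDl addrCA addrC.
apply: DeriveDef; first by rewrite /derivable quotE; exact: diff_derivable.
by rewrite /derive quotE -/(derive g _ h) deriveE // dgE.
Qed.

Lemma mvt_along_line (x h : 'rV[R]_n) :
  exists2 c : R, 0 < c < 1 & g (x + h) - g x = oc_dotv (dg (x + c *: h)) h.
Proof.
have der := is_derive_along_line x h.
have cont : {within `[0, 1], continuous (fun t : R => g (x + t *: h))}.
  by apply: derivable_within_continuous => s _; exact: ex_derive.
have [c c01 E] := MVT ltr01 (fun s _ => der s) cont.
by exists c; [move: c01; rewrite in_itv | move: E; rewrite scale1r scale0r addr0 subr0 mulr1].
Qed.

Lemma taylor_remainder_le (x h : 'rV[R]_n) :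
  `|g (x + h) - g x - oc_dotv (dg x) h| <= L * oc_dotv h h.
Proof.
have [c /andP [c_gt0 c_lt1] ->] := mvt_along_line x h; rewrite -dotvBl.
set d := dg (x + c *: h) - dg x.
have d_le : oc_enorm d <= L * oc_enorm h.
  apply: le_trans (dg_lipschitz _ _) _; rewrite addrC addKr enormZ gtr0_norm //.
  by rewrite ler_wpM2l //; apply: ler_piMl (enorm_ge0 _) (ltW c_lt1).
have dh_le : oc_enorm d * oc_enorm h <= L * oc_dotv h h.
  by rewrite -sqr_enorm expr2 mulrA ler_wpM2r ?enorm_ge0.
rewrite ler_norml; have := dotv_le_enorm d h; have := dotv_le_enorm (- d) h.
rewrite dotvNl enormN; lra.
Qed.

Lemma descent_ub (x h : 'rV[R]_n) :
  g (x + h) <= g x + oc_dotv (dg x) h + L * oc_dotv h h.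
Proof. by have := taylor_remainder_le x h; rewrite ler_norml => /andP[_]; lra. Qed.

Lemma descent_lb (x h : 'rV[R]_n) :
  g x + oc_dotv (dg x) h - L * oc_dotv h h <= g (x + h).
Proof. by have := taylor_remainder_le x h; rewrite ler_norml => /andP[+ _]; lra. Qed.

Lemma enorm_grad_le_ballK (Rad : R) (x : 'rV[R]_n) :
  oc_ballK Rad x -> oc_enorm (dg x) <= oc_enorm (dg 0) + L * Rad.
Proof.
rewrite /oc_ballK /= => x_le.
have := enormD (dg 0) (dg x - dg 0); rewrite addrC subrK => /le_trans; apply.
by rewrite lerD2l; apply: le_trans (dg_lipschitz _ _) _; rewrite subr0 ler_wpM2l.
Qed.

Hypothesis g_convex : oc_convex_fun g.

Lemma convex_gradient_le (x y : 'rV[R]_n) :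
  g x + oc_dotv (dg x) (y - x) <= g y.
Proof.
set h := y - x; set X := oc_dotv h h; set Z := oc_dotv (dg x) h.
have X_ge0 : 0 <= X by exact: dotvv_ge0.
have slope_le s : 0 < s -> s <= 1 -> Z <= g y - g x + L * s * X.
  move=> s_gt0 s_le1; have := g_convex y x (ltW s_gt0) s_le1.
  have -> : s *: y + (1 - s) *: x = x + s *: h.
    by rewrite /h scalerBr scalerBl scale1r addrCA addrC.
  have := descent_lb x (s *: h); rewrite !(dotvZl, dotvZr) -/X -/Z => lb ub.
  rewrite -(ler_pM2l s_gt0); nra.
(* Letting s tend to 0 in [slope_le] gives the claim. *)
rewrite addrC -lerBrDr; apply/ler_addgt0Pr => e e_gt0.
pose s := Num.min 1 (e / (L * X + 1)).
have LX_ge0 : 0 <= L * X by exact: mulr_ge0.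
have s_gt0 : 0 < s by rewrite lt_min ltr01 divr_gt0 //; lra.
have s_le : s * (L * X + 1) <= e by rewrite -ler_pdivlMr ?ge_min ?lexx ?orbT //; lra.
apply: le_trans (slope_le s s_gt0 _) _; first by rewrite ge_min lexx.
rewrite lerD2l; nra.
Qed.

Hypothesis g0_le0 : g 0 <= 0.

Lemma pospart_le_enorm_grad x :
  oc_pospart (g x) <= oc_enorm (dg x) * oc_enorm x.
Proof.
apply: pospart_ler; last by rewrite mulr_ge0 ?enorm_ge0.
have := convex_gradient_le x 0; rewrite sub0r dotvNr => /le_trans/(_ g0_le0).
by have := dotv_le_enorm (dg x) x; lra.
Qed.

Lemma alg_step_descent (sigma eta Rad G K : R) x v :
  0 < sigma -> 0 < Rad -> 0 <= eta ->
  oc_enorm (dg x) <= K -> oc_enorm x <= Rad -> oc_enorm v <= G ->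
  4 * L * oc_pospart (g x) <= sigma ->
  g (x - (eta *: v + (oc_pospart (g x) / sigma) *: dg x))
  <= oc_pospart (g x) + step_drift L K G eta
     - oc_pospart (g x) ^+ 3 / (2 * sigma * Rad ^+ 2).
Proof.
move=> sigma_gt0 Rad_gt0 eta_ge0 dgx_le x_le v_le a_le.
set a := oc_pospart (g x) in a_le *; set w := dg x; set beta := a / sigma.
have a_ge0 : 0 <= a := pospart_ge0 _.
have beta_ge0 : 0 <= beta by rewrite divr_ge0 // ltW.
set W := oc_dotv w w; set V := oc_dotv v v.
have W_ge0 : 0 <= W := dotvv_ge0 w.
have G_ge0 : 0 <= G := le_trans (enorm_ge0 v) v_le.
have V_le : V <= G ^+ 2 by rewrite /V -sqr_enorm ler_sqr ?nnegrE ?enorm_ge0.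
have wv_le : - oc_dotv w v <= K * G.
  rewrite -dotvNl; apply: le_trans (dotv_le_enorm _ _) _; rewrite enormN.
  by rewrite ler_pM ?enorm_ge0.
have a2_le : a ^+ 2 <= W * Rad ^+ 2.
  rewrite /W -sqr_enorm -exprMn ler_sqr ?nnegrE ?mulr_ge0 ?enorm_ge0 ?(ltW Rad_gt0) //.
  by apply: le_trans (pospart_le_enorm_grad x) _; rewrite ler_wpM2l ?enorm_ge0.
have cubic_le : a ^+ 3 / (2 * sigma * Rad ^+ 2) <= beta * W / 2.
  rewrite ler_pdivrMr ?mulr_gt0 ?exprn_gt0 //.
  have -> : beta * W / 2 * (2 * sigma * Rad ^+ 2) = a * (W * Rad ^+ 2).
    by rewrite /beta; field; rewrite gt_eqF.
  by rewrite exprS ler_wpM2l.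
have beta_le : 4 * L * beta <= 1 by rewrite /beta mulrA ler_pdivrMr // mul1r.
set h := eta *: v + beta *: w.
have wh : oc_dotv w h = eta * oc_dotv w v + beta * W by rewrite dotvDr !dotvZr.
have Lhh_le : L * oc_dotv h h <= 2 * L * eta ^+ 2 * G ^+ 2 + beta * W / 2.
  have := dotvvD_le (eta *: v) (beta *: w); rewrite !(dotvZl, dotvZr) -/V -/W.
  move=> /(ler_wpM2l L_ge0) /le_trans; apply.
  have : L * (eta ^+ 2 * V) <= L * (eta ^+ 2 * G ^+ 2).
    by rewrite ler_wpM2l // ler_wpM2l ?sqr_ge0.
  have : 4 * L * beta * (beta * W) <= 1 * (beta * W).
    by rewrite ler_wpM2r // mulr_ge0.
  rewrite !expr2; lra.
have eta_wv : - (eta * oc_dotv w v) <= eta * K * G.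
  by rewrite -mulrN -mulrA ler_wpM2l.
have := descent_ub x (- h); rewrite dotvNr dotvNl dotvNr opprK wh.
have := le_pospart (g x); rewrite /step_drift -/a -/w => ? ?; lra.
Qed.

Variables (sigma eta Rad G K Q : R).
Hypotheses (sigma_gt0 : 0 < sigma) (eta_gt0 : 0 < eta) (Rad_gt0 : 0 < Rad).
Hypothesis dg_le_ballK : forall x, oc_ballK Rad x -> oc_enorm (dg x) <= K.
Hypothesis drift_le_half : step_drift L K G eta <= Q / 2.
Hypothesis drift_le_cube :
  step_drift L K G eta <= Q ^+ 3 / 8 * (2 * sigma * Rad ^+ 2)^-1.
Hypothesis LQ_le : 4 * L * Q <= sigma.

Lemma alg_step_invariant x v x' :
  oc_ballK Rad x -> oc_enorm v <= G -> oc_pospart (g x) <= Q ->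
  oc_alg_step g dg Rad sigma eta x v x' ->
  oc_ballK Rad x' /\ oc_pospart (g x') <= Q.
Proof.
move=> x_in v_le gx_le step; split; first by case: step.
apply: le_trans (pospart_proj_ballK g_convex g0_le0 (ltW Rad_gt0) step) _.
rewrite alg_step_argE ?gt_eqF //; apply: pospart_ler; last first.
  exact: le_trans (pospart_ge0 _) gx_le.
have LQ_ge : 4 * L * oc_pospart (g x) <= sigma.
  by apply: le_trans LQ_le; rewrite ler_wpM2l ?mulr_ge0.
apply: le_trans (alg_step_descent sigma_gt0 Rad_gt0 (ltW eta_gt0) (dg_le_ballK x_in)
                   x_in v_le LQ_ge) _.
apply: cubic_drift_le (pospart_ge0 _) gx_le _ drift_le_half drift_le_cube.
by rewrite invr_gt0 !mulr_gt0 ?exprn_gt0.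
Qed.

Lemma alg_iterates_invariant (T : nat) (v theta : nat -> 'rV[R]_n) :
  oc_ballK Rad (theta 1%N) -> oc_pospart (g (theta 1%N)) <= Q ->
  (forall t, (1 <= t < T)%N -> oc_enorm (v t) <= G) ->
  (forall t, (1 <= t < T)%N ->
     oc_alg_step g dg Rad sigma eta (theta t) (v t) (theta t.+1)) ->
  forall t, (1 <= t <= T)%N -> oc_ballK Rad (theta t) /\ oc_pospart (g (theta t)) <= Q.
Proof.
move=> theta1_in g1_le v_le step.
apply: nat_ind_from1_upto => // t t_lt [theta_in gt_le].
exact: alg_step_invariant theta_in (v_le t t_lt) gt_le (step t t_lt).
Qed.

End SmoothConstraint.

Section Rates.
Variable R : realType.
Local Notation rate T := ((T%:R : R) `^ (- 6^-1)).

Lemma rate_gt0 (T : nat) : (0 < T)%N -> 0 < rate T.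
Proof. by move=> T_gt0; rewrite powR_gt0 // ltr0n. Qed.

Lemma expr3_rate (T : nat) : rate T ^+ 3 = (Num.sqrt T%:R)^-1.
Proof.
rewrite -powR_mulrn ?powR_ge0 // -powRrM.
by rewrite (_ : - 6^-1 * 3%:R = - 2^-1) ?powRN ?powR12_sqrt //; field.
Qed.

Lemma expr6_rate (T : nat) : rate T ^+ 6 = T%:R^-1.
Proof. by rewrite (exprM _ 3 2) expr3_rate exprVn sqr_sqrtr. Qed.

Lemma rate_le (eps : R) : 0 < eps ->
  exists T0 : nat, forall T, (T0 <= T)%N -> (0 < T)%N /\ rate T <= eps.
Proof.
move=> eps_gt0; set B := (eps ^+ 6)^-1.
have B_gt0 : 0 < B by rewrite invr_gt0 exprn_gt0.
exists (Num.truncn B).+1 => T T_ge; split; first exact: leq_trans T_ge.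
have B_lt : B < T%:R.
  by apply: lt_le_trans (truncnS_gt B) _; rewrite ler_nat.
rewrite -(ler_pXn2r (isT : (0 < 6)%N)) ?nnegrE ?powR_ge0 ?(ltW eps_gt0) //.
by rewrite expr6_rate -[eps ^+ 6]invrK -/B lef_pV2 ?posrE //; lra.
Qed.

Lemma eta_par_rate (G Rad : R) (T : nat) : 0 < G -> 0 < Rad -> (0 < T)%N ->
  oc_eta_par G Rad T = 1 / (G * Num.sqrt (2 * Rad)) * rate T ^+ 3.
Proof.
move=> G_gt0 Rad_gt0 T_gt0.
have sqrtT_gt0 : 0 < Num.sqrt (T%:R : R) by rewrite sqrtr_gt0 ltr0n.
have sqrtR_gt0 : 0 < Num.sqrt (2 * Rad) by rewrite sqrtr_gt0 mulr_gt0.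
rewrite /oc_eta_par expr3_rate sqrtrM ?mulr_ge0 ?ltW //.
by field; rewrite !gt_eqF.
Qed.

Lemma rate_constants (L K G e0 k C sigma : R) :
  0 <= L -> 0 <= K -> 0 <= G -> 0 < e0 -> 0 < k -> 0 <= C -> 0 < sigma ->
  exists (T0 : nat) (M : R), 0 < M /\ forall T, (T0 <= T)%N ->
  [/\ (0 < T)%N, step_drift L K G (e0 * rate T ^+ 3) <= M * rate T / 2,
      step_drift L K G (e0 * rate T ^+ 3) <= (M * rate T) ^+ 3 / 8 * k,
      4 * L * (M * rate T) <= sigma & C * rate T <= M * rate T].
Proof.
move=> L_ge0 K_ge0 G_ge0 e0_gt0 k_gt0 C_ge0 sigma_gt0.
set c := K * G + 2 * L * G ^+ 2.
have c_ge0 : 0 <= c by rewrite addr_ge0 ?mulr_ge0 ?sqr_ge0.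
have ce0_ge0 : 0 <= c * e0 by rewrite mulr_ge0 // ltW.
(* Only [4 L M q <= sigma] and [e0 q^3 <= 1] require T to be large; the other
   constraints on M hold for every q <= 1. *)
set M := C + 1 + 8 * (c * e0) / k + 2 * (c * e0).
have k8_ge0 : 0 <= 8 * (c * e0) / k by rewrite divr_ge0 ?mulr_ge0 // ltW.
have k8_le : 8 * (c * e0) / k <= M by rewrite /M; lra.
have M_ge1 : 1 <= M by rewrite /M; lra.
have LM_ge0 : 0 <= 4 * L * M by rewrite !mulr_ge0 //; lra.
have eps_gt0 : 0 < Num.min (1 / (e0 + 1)) (sigma / (4 * L * M + 1)).
  by rewrite lt_min !divr_gt0 //; lra.
have [T0 T0_le] := rate_le eps_gt0.
exists T0, M; split=> [|T /T0_le[T_gt0]]; first lra.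
set q := rate T; have q_gt0 : 0 < q := rate_gt0 T_gt0.
rewrite le_min => /andP[q_le_e0 q_le_sigma].
have q_e0_le : q * (e0 + 1) <= 1 by rewrite -ler_pdivlMr //; lra.
have q_LM_le : q * (4 * L * M + 1) <= sigma by rewrite -ler_pdivlMr //; lra.
have e0q_ge0 : 0 <= e0 * q by rewrite mulr_ge0 ?ltW.
have q_le1 : q <= 1 by nra.
have q3_le : q ^+ 3 <= q.
  by rewrite exprS; apply: ler_piMr; [exact: ltW | exact: exprn_ile1 (ltW q_gt0) q_le1].
have q3_ge0 : 0 <= q ^+ 3 by rewrite exprn_ge0 ?ltW.
have e0q3_le : e0 * q ^+ 3 <= e0 * q := ler_wpM2l (ltW e0_gt0) q3_le.
have drift_le : step_drift L K G (e0 * q ^+ 3) <= c * (e0 * q ^+ 3).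
  apply: step_drift_le => //.
  by rewrite mulr_ge0 ?(ltW e0_gt0) //=; lra.
have M_cube : M <= M ^+ 3.
  have M2_ge1 : 1 <= M ^+ 2 by rewrite expr2; exact: mulr_ege1.
  by rewrite exprS -{1}[M]mulr1 ler_wpM2l //; lra.
have ce0_le : 8 * (c * e0) <= M ^+ 3 * k.
  by apply: le_trans (ler_wpM2r (ltW k_gt0) M_cube); rewrite -ler_pdivrMr.
split=> //; try (apply: le_trans drift_le _).
- have ce0q_le : 2 * (c * e0) * q <= M * q by rewrite ler_pM2r // /M; lra.
  have := ler_wpM2l c_ge0 e0q3_le; lra.
- by have := ler_wpM2r q3_ge0 ce0_le; rewrite exprMn; lra.
- lra.
- by rewrite ler_pM2r // /M; lra.
Qed.

End Rates.

Lemma sigma_par_gt0 (R : realType) (G alpha : R) :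
  0 < G -> alpha < 1 -> 0 < oc_sigma_par G alpha.
Proof. by move=> G_gt0 alpha_lt1; rewrite divr_gt0 ?mulr_gt0 ?exprn_gt0 ?subr_gt0. Qed.

Unset Implicit Arguments. Set Strict Implicit.

Theorem lemma5p2 (R : realType) (n : nat)
  (g : 'rV[R]_n -> R) (dg : 'rV[R]_n -> 'rV[R]_n)
  (L G r Rad alpha : R) :
  oc_convex_fun g -> oc_is_gradient g dg ->
  0 <= L -> (forall x y, oc_enorm (dg x - dg y) <= L * oc_enorm (x - y)) ->
  0 < r -> r < 1 ->
  oc_ballK r `<=` [set x | g x <= 0] ->
  [set x | g x <= 0] `<=` oc_ballK Rad ->
  0 < G -> oc_lipschitz_on (oc_ballK Rad) G g ->
  0 < alpha -> alpha < 1 ->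
  forall C : R, 0 < C ->
  exists (T0 : nat) (C' : R), 0 < C' /\
  forall (T : nat) (f : nat -> 'rV[R]_n -> R) (v theta : nat -> 'rV[R]_n),
    (T0 <= T)%N ->
    (forall t, (1 <= t <= T)%N ->
       [/\ oc_convex_fun (f t), oc_lipschitz_on (oc_ballK Rad) G (f t),
           oc_subgradient (f t) (theta t) (v t) & oc_enorm (v t) <= G]) ->
    oc_ballK Rad (theta 1%N) ->
    (forall t, (1 <= t < T)%N ->
       oc_alg_step g dg Rad (oc_sigma_par G alpha) (oc_eta_par G Rad T)
                (theta t) (v t) (theta t.+1)) ->
    oc_pospart (g (theta 1%N)) <= C * (T%:R `^ (- 6^-1)) ->
    forall t, (1 <= t <= T)%N ->
      oc_pospart (g (theta t)) <= C' * (T%:R `^ (- 6^-1)).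
Proof.
move=> g_convex g_grad L_ge0 dg_lip r_gt0 _ ballr_sub _ G_gt0 _ _ alpha_lt1 C C_gt0.
have g0_le0 : g 0 <= 0 by apply: (ballr_sub 0); rewrite /oc_ballK /= enorm0 ltW.
have [Rad_le0|Rad_gt0] := leP Rad 0.
  (* then B is inside rK, so every iterate is feasible *)
  exists 0%N, 1; split=> // T f v theta _ _ theta1_in step _ t t_range.
  have : oc_ballK Rad (theta t).
    by move: t t_range; apply: nat_ind_from1_upto => // s s_lt _; case: (step s s_lt).
  rewrite /oc_ballK /= => theta_le.
  have gt_le0 : g (theta t) <= 0 by apply: (ballr_sub _); rewrite /oc_ballK /=; lra.
  by rewrite /oc_pospart max_r // mul1r powR_ge0.
set K := oc_enorm (dg 0) + L * Rad.
have K_ge0 : 0 <= K by rewrite addr_ge0 ?enorm_ge0 // mulr_ge0 // ltW.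
have sigma_gt0 := sigma_par_gt0 G_gt0 alpha_lt1.
have e0_gt0 : 0 < 1 / (G * Num.sqrt (2 * Rad)).
  by rewrite divr_gt0 ?mulr_gt0 ?sqrtr_gt0 ?mulr_gt0.
have k_gt0 : 0 < (2 * oc_sigma_par G alpha * Rad ^+ 2)^-1.
  by rewrite invr_gt0 mulr_gt0 ?exprn_gt0 // mulr_gt0.
have [T0 [M [M_gt0 constants]]] :=
  rate_constants L_ge0 K_ge0 (ltW G_gt0) e0_gt0 k_gt0 (ltW C_gt0) sigma_gt0.
exists T0, M; split=> // T f v theta /constants[T_gt0 drift1 drift2 LM_le CM_le].
move=> f_props theta1_in step g1_le t t_range.
have eta_gt0 : 0 < oc_eta_par G Rad T.
  by rewrite eta_par_rate // mulr_gt0 ?exprn_gt0 ?rate_gt0.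
rewrite -(eta_par_rate G_gt0 Rad_gt0 T_gt0) in drift1 drift2.
have v_le s : (1 <= s < T)%N -> oc_enorm (v s) <= G.
  by case/andP=> s_ge1 s_lt; have [] := f_props s; rewrite ?s_ge1 1?ltnW.
have [_ //] := alg_iterates_invariant g_grad L_ge0 dg_lip g_convex g0_le0 sigma_gt0
  eta_gt0 Rad_gt0 (enorm_grad_le_ballK (Rad := Rad) L_ge0 dg_lip) drift1 drift2 LM_le
  theta1_in (le_trans g1_le CM_le) v_le step t_range.
Qed.
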